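(* For every $k\ge1$ and every vector $\vec v_0$ of natural numbers over the counters of $\mathcal B_k$ such that $\vec v_0(d_i)=\vec v_0(d'_i)=0$ for all $i<k$, the BVASS $\mathcal B_k$ has a $(q^{\mathrm{init}}_k,\vec v_0)$-rooted $\{q^{\mathrm{leaf}}\}$-leaf-covering deduction tree if and only if $\vec v_0(d_k)\ge\mathrm{tower}(k)$.
   Context: A BVASS of dimension $D$ with counters indexed by a finite set consists of a finite set of states, unary rules $q\xrightarrow{\vec u}q_1$ with $\vec u\in\mathbb Z^D$, and split rules $q\to q_1+q_2$. A deduction tree is a finite tree labelled by configurations $(q,\vec v)$, $\vec v\in\mathbb N^D$, where each internal node $(q,\vec v)$ has either one child $(q_1,\vec v+\vec u)$ (with $\vec v+\vec u\ge\vec 0$) for a unary rule $(q,\vec u,q_1)$, or two children $(q_1,\vec v_1),(q_2,\vec v_2)$ with $\vec v_1+\vec v_2=\vec v$ for a split rule $(q,q_1,q_2)$. It is $(q,\vec v)$-rooted if its root is labelled $(q,\vec v)$ and $Q_\ell$-leaf-covering if the state of every leaf label is in $Q_\ell$ (no condition on vectors). $\mathrm{tower}(0)=1$, $\mathrm{tower}(n+1)=2^{\mathrm{tower}(n)}$. The BVASS $\mathcal B_k$ has counters $d_1,\dots,d_k,d'_1,\dots,d'_{k-1}$, defined recursively. $\mathcal B_1$ has states $q^{\mathrm{init}}_1,q^{\mathrm{leaf}}$ and one unary rule $q^{\mathrm{init}}_1\xrightarrow{-2\vec e_{d_1}}q^{\mathrm{leaf}}$. For $k>1$, $\mathcal B_k$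 consists of $\mathcal B_{k-1}$ plus new states $q^{\mathrm{init}}_k,q^1_k,q^2_k,q^{\mathrm{loop}}_k$ and rules: $q^{\mathrm{init}}_k\xrightarrow{\vec e_{d_{k-1}}}q^1_k$; $q^1_k\xrightarrow{-\vec e_{d_{k-1}}+2\vec e_{d'_{k-1}}}q^1_k$; $q^1_k\xrightarrow{\vec 0}q^2_k$; $q^2_k\xrightarrow{-\vec e_{d'_{k-1}}+\vec e_{d_{k-1}}}q^2_k$; split $q^2_k\to q^{\mathrm{loop}}_k+q^{\mathrm{loop}}_k$; $q^{\mathrm{loop}}_k\xrightarrow{\vec 0}q^{\mathrm{init}}_k$; and $q^{\mathrm{loop}}_k\xrightarrow{-\vec e_{d_k}}q^{\mathrm{init}}_{k-1}$. Here $\vec e_c$ denotes the unit vector for counter $c$. *)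

From Stdlib Require Import Arith ZArith Bool.
Open Scope Z_scope.

Record BVASS (Q C : Type) := mkBVASS {
  unary_rule : Q -> (C -> Z) -> Q -> Prop;
  split_rule : Q -> Q -> Q -> Prop
}.
Arguments unary_rule {Q C} _ _ _ _.
Arguments split_rule {Q C} _ _ _ _.

Inductive dtree (Q C : Type) : Type :=
| DLeaf  : Q -> (C -> nat) -> dtree Q C
| DUnary : Q -> (C -> nat) -> dtree Q C -> dtree Q C
| DSplit : Q -> (C -> nat) -> dtree Q C -> dtree Q C -> dtree Q C.
Arguments DLeaf {Q C} _ _.
Arguments DUnary {Q C} _ _ _.
Arguments DSplit {Q C} _ _ _ _.

Definition dstate {Q C} (t : dtree Q C) : Q :=
  match t with DLeaf q _ | DUnary q _ _ | DSplit q _ _ _ => q end.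
Definition dvec {Q C} (t : dtree Q C) : C -> nat :=
  match t with DLeaf _ v | DUnary _ v _ | DSplit _ v _ _ => v end.

Fixpoint is_deduction_tree {Q C} (B : BVASS Q C) (t : dtree Q C) : Prop :=
  match t with
  | DLeaf _ _ => True
  | DUnary q v t1 =>
      (exists u : C -> Z,
          unary_rule B q u (dstate t1) /\
          (* child vector = v + u (which is therefore >= 0) *)
          forall c, Z.of_nat (dvec t1 c) = Z.of_nat (v c) + u c)
      /\ is_deduction_tree B t1
  | DSplit q v t1 t2 =>
      split_rule B q (dstate t1) (dstate t2) /\
      (forall c, (dvec t1 c + dvec t2 c)%nat = v c) /\
      is_deduction_tree B t1 /\ is_deduction_tree B t2
  end.

Definition rooted {Q C} (t : dtree Q C) (q : Q) (v : C -> nat) : Prop :=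
  dstate t = q /\ forall c, dvec t c = v c.

Fixpoint leaf_covering {Q C} (Ql : Q -> Prop) (t : dtree Q C) : Prop :=
  match t with
  | DLeaf q _ => Ql q
  | DUnary _ _ t1 => leaf_covering Ql t1
  | DSplit _ _ t1 t2 => leaf_covering Ql t1 /\ leaf_covering Ql t2
  end.

Fixpoint tower (n : nat) : nat :=
  match n with O => 1 | S m => 2 ^ tower m end.

Inductive ctr : Type := cd (i : nat) | cd' (i : nat).

Definition ctr_eqb (a b : ctr) : bool :=
  match a, b with
  | cd i, cd j => Nat.eqb i j
  | cd' i, cd' j => Nat.eqb i j
  | _, _ => false
  end.

Definition is_bctr (k : nat) (c : ctr) : bool :=
  match c with
  | cd i => (1 <=? i)%nat && (i <=? k)%nat
  | cd' i => (1 <=? i)%nat && (i <? k)%nat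
  end.
Definition bctr (k : nat) : Type := { c : ctr | is_bctr k c = true }.

Definition evec (k : nat) (c : ctr) : bctr k -> Z :=
  fun x => if ctr_eqb (proj1_sig x) c then 1 else 0.
Definition zvec (k : nat) : bctr k -> Z := fun _ => 0.
Definition vadd {k} (u w : bctr k -> Z) : bctr k -> Z := fun x => u x + w x.
Definition vscale {k} (a : Z) (u : bctr k -> Z) : bctr k -> Z := fun x => a * u x.

(* B_k uses qinit j (1<=j<=k),
   q1/q2/qloop j (2<=j<=k) and qleaf; only these occur in its rules. *)
Inductive bstate : Type :=
| qinit (j : nat) | q1 (j : nat) | q2 (j : nat) | qloop (j : nat) | qleaf.

(* Unary rules of B_k (B_k = B_{k-1} plus the level-k rules, unfolded). *)
Inductive Bk_unary (k : nat) : bstate -> (bctr k -> Z) -> bstate -> Prop :=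
| BU_base : (1 <= k)%nat ->
    Bk_unary k (qinit 1) (vscale (-2) (evec k (cd 1))) qleaf
| BU_init : forall j, (2 <= j <= k)%nat ->
    Bk_unary k (qinit j) (evec k (cd (j - 1))) (q1 j)
| BU_loop1 : forall j, (2 <= j <= k)%nat ->
    Bk_unary k (q1 j)
      (vadd (vscale (-1) (evec k (cd (j - 1)))) (vscale 2 (evec k (cd' (j - 1)))))
      (q1 j)
| BU_12 : forall j, (2 <= j <= k)%nat ->
    Bk_unary k (q1 j) (zvec k) (q2 j)
| BU_loop2 : forall j, (2 <= j <= k)%nat ->
    Bk_unary k (q2 j)
      (vadd (vscale (-1) (evec k (cd' (j - 1)))) (evec k (cd (j - 1))))
      (q2 j)
| BU_back : forall j, (2 <= j <= k)%nat ->
    Bk_unary k (qloop j) (zvec k) (qinit j)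
| BU_down : forall j, (2 <= j <= k)%nat ->
    Bk_unary k (qloop j) (vscale (-1) (evec k (cd j))) (qinit (j - 1)).

Inductive Bk_split (k : nat) : bstate -> bstate -> bstate -> Prop :=
| BS : forall j, (2 <= j <= k)%nat -> Bk_split k (q2 j) (qloop j) (qloop j).

Definition B (k : nat) : BVASS bstate (bctr k) :=
  mkBVASS bstate (bctr k) (Bk_unary k) (Bk_split k).

Lemma is_bctr_dk (k : nat) : (1 <= k)%nat -> is_bctr k (cd k) = true.
Proof.
  intro H; unfold is_bctr. apply andb_true_intro; split.
  - apply (proj2 (Nat.leb_le 1 k)); exact H.
  - apply (proj2 (Nat.leb_le k k)); apply le_n.
Qed.
Definition dk (k : nat) (Hk : (1 <= k)%nat) : bctr k := exist _ (cd k) (is_bctr_dk k Hk).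

(* Necessity, by induction on the level: for a tree rooted in a level-(m+1)
   state with a = d_m, b = d'_m, c = d_{m+1}, the budget [Inv] --
   roughly c^2 2^(2a+b) >= 4^(tower m) -- is inherited from the children:
   the loops preserve 2a+b resp. a+b, a split halves c (AM-GM,
   [split_bound]) and the descent to level m is paid by the level-m bound.
   At q^init with a = b = 0 it gives c >= 2^(tower m) = tower (m+1).

   Sufficiency, by induction on the level: one round at level m+1 turns d_m
   into 2(d_m + 1) and splits it equally between two q^loop copies, halving
   d_{m+1}; after tower m rounds every copy descends to level m. *)

From Stdlib Require Import Arith ZArith Lia Bool Eqdep_dec.

Local Open Scope nat_scope.

Section Reachability.

Variables (Q C : Type) (BV : BVASS Q C) (Ql : Q -> Prop).

Inductive reach : Q -> (C -> nat) -> Prop :=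
| reach_leaf q v : Ql q -> reach q v
| reach_unary q v u q1 v1 :
    unary_rule BV q u q1 ->
    (forall c, Z.of_nat (v1 c) = (Z.of_nat (v c) + u c)%Z) ->
    reach q1 v1 -> reach q v
| reach_split q v q1 v1 q2 v2 :
    split_rule BV q q1 q2 -> (forall c, v1 c + v2 c = v c) ->
    reach q1 v1 -> reach q2 v2 -> reach q v.

Lemma reach_ext q v w : (forall c, v c = w c) -> reach q v -> reach q w.
Proof.
  intros Hvw Hr;
    destruct Hr as [q v Hl | q v u q1 v1 Hu Hs Hr1 | q v q1 v1 q2 v2 Hsp Hsum Hr1 Hr2].
  - now apply reach_leaf.
  - apply (reach_unary q w u q1 v1); auto. intros c; rewrite <- Hvw; apply Hs.
  - apply (reach_split q w q1 v1 q2 v2); auto. intros c; rewrite <- Hvw; apply Hsum.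
Qed.

Lemma reach_iff_tree q v :
  (exists t, is_deduction_tree BV t /\ rooted t q v /\ leaf_covering Ql t) <-> reach q v.
Proof.
  split.
  - intros [t [Hd [[Hq Hv] Hc]]]. apply (reach_ext q (dvec t)); [exact Hv|].
    subst q; clear Hv. induction t as [q w | q w t1 IH | q w t1 IH1 t2 IH2]; simpl in *.
    + now apply reach_leaf.
    + destruct Hd as [[u [Hu Hs]] Hd1]. now apply (reach_unary q w u (dstate t1) (dvec t1)), IH.
    + destruct Hd as [Hsp [Hsum [Hd1 Hd2]]], Hc as [Hc1 Hc2].
      now apply (reach_split q w (dstate t1) (dvec t1) (dstate t2) (dvec t2)); auto.
  - induction 1 as [q v Hl | q v u q1 v1 Hu Hs _ [t [Hd [[Hq Hv] Hc]]]
                   | q v q1 v1 q2 v2 Hsp Hsum _ [t1 [Hd1 [[Hq1 Hv1] Hc1]]]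
                                           _ [t2 [Hd2 [[Hq2 Hv2] Hc2]]]].
    + exists (DLeaf q v); repeat split; simpl; auto.
    + exists (DUnary q v t); repeat split; simpl; auto.
      exists u; split; [now rewrite Hq|]. intros c; rewrite Hv; apply Hs.
    + exists (DSplit q v t1 t2); repeat split; simpl; auto.
      * now rewrite Hq1, Hq2.
      * intros c; rewrite Hv1, Hv2; apply Hsum.
Qed.

End Reachability.

Arguments reach {Q C} BV Ql _ _.
Arguments reach_leaf {Q C BV Ql}.
Arguments reach_unary {Q C BV Ql}.
Arguments reach_split {Q C BV Ql}.

(* Squaring
   both sides, this is [4 c1 c2 <= (c1+c2)^2] (AM-GM). *)
Lemma split_bound X c1 c2 e1 e2 e :
  X <= c1 * c1 * 2 ^ e1 -> X <= c2 * c2 * 2 ^ e2 -> e1 + e2 <= 2 * e ->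
  4 * X <= (c1 + c2) * (c1 + c2) * 2 ^ e.
Proof.
  intros H1 H2 He. apply Nat.square_le_simpl_nonneg; [lia|].
  assert (Hamgm : 4 * (c1 * c2) <= (c1 + c2) * (c1 + c2)).
  { destruct (Nat.le_ge_cases c1 c2) as [H|H];
      destruct (Nat.le_exists_sub _ _ H) as [d [-> _]]; nia. }
  assert (Hpow : 2 ^ e1 * 2 ^ e2 <= 2 ^ e * 2 ^ e).
  { rewrite <- !Nat.pow_add_r. apply Nat.pow_le_mono_r; lia. }
  assert (HX : X * X <= (c1 * c2) * (c1 * c2) * (2 ^ e1 * 2 ^ e2)).
  { replace ((c1 * c2) * (c1 * c2) * (2 ^ e1 * 2 ^ e2))
      with ((c1 * c1 * 2 ^ e1) * (c2 * c2 * 2 ^ e2)) by ring.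
    now apply Nat.mul_le_mono. }
  assert (Hsq : (4 * (c1 * c2)) * (4 * (c1 * c2))
                <= ((c1 + c2) * (c1 + c2)) * ((c1 + c2) * (c1 + c2)))
    by now apply Nat.mul_le_mono.
  nia.
Qed.

Definition ctr_index (c : ctr) : nat := match c with cd i | cd' i => i end.

Lemma is_bctr_cd k i : 1 <= i -> i <= k -> is_bctr k (cd i) = true.
Proof. intros; unfold is_bctr; apply andb_true_intro; split; apply Nat.leb_le; lia. Qed.

Lemma is_bctr_cd' k i : 1 <= i -> i < k -> is_bctr k (cd' i) = true.
Proof. intros; unfold is_bctr; apply andb_true_intro; split; [apply Nat.leb_le | apply Nat.ltb_lt]; lia. Qed.

(* A counter of B_k is determined by its name (membership is a boolean). *)
Lemma bctr_eq k (x y : bctr k) : proj1_sig x = proj1_sig y -> x = y.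
Proof.
  destruct x as [x Hx], y as [y Hy]; simpl; intros ->.
  f_equal; apply UIP_dec, bool_dec.
Qed.

(* Extension by zero of a vector of B_k to all counter names, so that
   statements can refer to d_i and d'_i without membership proofs. *)
Definition cval {k} (v : bctr k -> nat) (c : ctr) : nat :=
  match bool_dec (is_bctr k c) true with left H => v (exist _ c H) | right _ => 0 end.

Lemma cval_at k (v : bctr k -> nat) x : cval v (proj1_sig x) = v x.
Proof.
  unfold cval; destruct bool_dec as [H|H].
  - f_equal; now apply bctr_eq.
  - destruct x; simpl in *; congruence.
Qed.

Lemma cval_sum k (v1 v2 v : bctr k -> nat) :
  (forall x, v1 x + v2 x = v x) -> forall c, cval v1 c + cval v2 c = cval v c.
Proof. intros H c; unfold cval; destruct bool_dec; auto. Qed.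

Lemma cval_step k (v w : bctr k -> nat) (u : bctr k -> Z) :
  (forall x, Z.of_nat (w x) = (Z.of_nat (v x) + u x)%Z) ->
  forall c (Hc : is_bctr k c = true),
    Z.of_nat (cval w c) = (Z.of_nat (cval v c) + u (exist _ c Hc))%Z.
Proof.
  intros H c Hc; unfold cval; destruct bool_dec as [H'|H']; [|congruence].
  rewrite H; do 2 f_equal; now apply bctr_eq.
Qed.

Definition lowz (m : nat) (V : ctr -> nat) : Prop :=
  forall c, ctr_index c < m -> V c = 0.

(* The level of a state: rules leaving a level-j state only touch counters
   of index at least j - 1. *)
Definition state_level (s : bstate) : nat :=
  match s with qinit j | q1 j | q2 j | qloop j => j | qleaf => 0 end.

Lemma evec_below k c (x : bctr k) :
  ctr_index (proj1_sig x) < ctr_index c -> evec k c x = 0%Z.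
Proof.
  unfold evec; destruct x as [[i|i] Hx], c as [j|j]; simpl; intros Hlt; try reflexivity;
    destruct (Nat.eqb_spec i j); lia.
Qed.

Lemma unary_frame k s u s' : Bk_unary k s u s' ->
  forall x, ctr_index (proj1_sig x) < state_level s - 1 -> u x = 0%Z.
Proof.
  intros Hr x Hx; destruct Hr; simpl in Hx;
    unfold vadd, vscale, zvec; rewrite ?evec_below by (simpl; lia); lia.
Qed.

Lemma lowz_unary k m (v w : bctr k -> nat) (u : bctr k -> Z) :
  (forall x, Z.of_nat (w x) = (Z.of_nat (v x) + u x)%Z) ->
  (forall x, ctr_index (proj1_sig x) < m -> u x = 0%Z) ->
  lowz m (cval v) -> lowz m (cval w).
Proof.
  intros Hs Hu Hl c Hc; unfold cval; destruct bool_dec as [H|H]; [|reflexivity].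
  pose proof (Hs (exist _ c H)) as E; rewrite Hu in E by exact Hc.
  specialize (Hl c Hc); rewrite <- (cval_at k v (exist _ c H)) in E; simpl in E; lia.
Qed.

Lemma lowz_split k m (v1 v2 v : bctr k -> nat) :
  (forall x, v1 x + v2 x = v x) -> lowz m (cval v) -> lowz m (cval v1) /\ lowz m (cval v2).
Proof.
  intros Hsum Hl; split; intros c Hc; specialize (Hl c Hc);
    pose proof (cval_sum k v1 v2 v Hsum c); lia.
Qed.

Definition leafQ (q : bstate) : Prop := q = qleaf.

(* Budget invariant at level m+1, with T = tower m, a = d_m, b = d'_m,
   c = d_{m+1}: a tree rooted in a level-(m+1) state needs
   c^2 * 2^(2a+b) >= 4^T in q^init/q^loop (more in q^1, q^2, which
   commit to an upcoming split).  At q^init with a = b = 0 this reads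
   c >= 2^T = tower (m+1). *)
Definition Inv (m : nat) (s : bstate) (V : ctr -> nat) : Prop :=
  let a := V (cd m) in let b := V (cd' m) in let c := V (cd (S m)) in
  let X := 2 ^ (2 * tower m) in
  match s with
  | qinit j | qloop j => j = S m -> X <= c * c * 2 ^ (2 * a + b)
  | q1 j => j = S m -> 4 * X <= c * c * 2 ^ (2 * a + b)
  | q2 j => j = S m -> 4 * X <= c * c * 2 ^ (a + b)
  | qleaf => True
  end.

Lemma Inv_off_level m s V : state_level s <> S m -> Inv m s V.
Proof. destruct s; simpl; tauto. Qed.

Ltac simpl_disp H :=
  unfold evec, vadd, vscale, zvec in H; cbn [proj1_sig ctr_eqb] in H;
  repeat match type of H with context [Nat.eqb ?x ?y] => destruct (Nat.eqb_spec x y); try lia end.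

Section Necessity.

Variables (k m : nat).
Hypotheses (Hm : 1 <= m) (Hmk : S m <= k).

(* The invariant is inherited backwards along unary rules; the rule going
   down to q^init_m needs the level-m bound [tower m <= d_m] there. *)
Lemma Inv_unary s u s1 (v v1 : bctr k -> nat) :
  Bk_unary k s u s1 ->
  (forall x, Z.of_nat (v1 x) = (Z.of_nat (v x) + u x)%Z) ->
  Inv m s1 (cval v1) -> (s1 = qinit m -> tower m <= cval v1 (cd m)) ->
  Inv m s (cval v).
Proof.
  intros Hr Hs Hinv Hdown.
  assert (Ia : is_bctr k (cd m) = true) by (apply is_bctr_cd; lia).
  assert (Ib : is_bctr k (cd' m) = true) by (apply is_bctr_cd'; lia).
  assert (Ic : is_bctr k (cd (S m)) = true) by (apply is_bctr_cd; lia).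
  pose proof (cval_step k v v1 u Hs (cd m) Ia) as HA.
  pose proof (cval_step k v v1 u Hs (cd' m) Ib) as HB.
  pose proof (cval_step k v v1 u Hs (cd (S m)) Ic) as HC.
  destruct Hr; unfold Inv; cbv zeta; intros Hj; try lia; subst j;
    replace (S m - 1) with m in * by lia;
    simpl_disp HA; simpl_disp HB; simpl_disp HC; unfold Inv in Hinv; cbv zeta in Hinv;
    set (a := cval v (cd m)) in *; set (b := cval v (cd' m)) in *;
    set (c := cval v (cd (S m))) in *.
  - (* q^init -> q^1 adds 1 to d_m, multiplying the weight by 4 *)
    specialize (Hinv eq_refl). replace (cval v1 (cd m)) with (a + 1) in Hinv by lia.
    replace (cval v1 (cd' m)) with b in Hinv by lia.
    replace (cval v1 (cd (S m))) with c in Hinv by lia.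
    replace (2 * (a + 1) + b) with (2 + (2 * a + b)) in Hinv by lia.
    rewrite Nat.pow_add_r in Hinv.
    replace (c * c * (2 ^ 2 * 2 ^ (2 * a + b))) with (4 * (c * c * 2 ^ (2 * a + b))) in Hinv
      by (simpl; ring).
    lia.
  - (* the q^1 loop preserves 2a + b *)
    specialize (Hinv eq_refl).
    replace (2 * cval v1 (cd m) + cval v1 (cd' m)) with (2 * a + b) in Hinv by lia.
    replace (cval v1 (cd (S m))) with c in Hinv by lia. exact Hinv.
  - (* q^1 -> q^2: the weight 2^(a+b) is at most 2^(2a+b) *)
    specialize (Hinv eq_refl). eapply Nat.le_trans; [exact Hinv|].
    replace (cval v1 (cd (S m))) with c by lia.
    apply Nat.mul_le_mono_l, Nat.pow_le_mono_r; lia.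
  - (* the q^2 loop preserves a + b *)
    specialize (Hinv eq_refl).
    replace (cval v1 (cd m) + cval v1 (cd' m)) with (a + b) in Hinv by lia.
    replace (cval v1 (cd (S m))) with c in Hinv by lia. exact Hinv.
  -
    specialize (Hinv eq_refl).
    replace (cval v1 (cd m)) with a in Hinv by lia.
    replace (cval v1 (cd' m)) with b in Hinv by lia.
    replace (cval v1 (cd (S m))) with c in Hinv by lia. exact Hinv.
  - (* q^loop -> q^init_m consumes one unit of d_{m+1} and needs d_m >= tower m *)
    specialize (Hdown eq_refl).
    assert (Hc1 : 1 <= c * c) by nia.
    apply (Nat.le_trans _ (2 ^ (2 * a + b))); [apply Nat.pow_le_mono_r; lia|].
    rewrite <- (Nat.mul_1_l (2 ^ (2 * a + b))) at 1. now apply Nat.mul_le_mono_r.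
Qed.

(* At a split, both children are q^loop states and the budget halves. *)
Lemma Inv_split s s1 s2 (v v1 v2 : bctr k -> nat) :
  Bk_split k s s1 s2 -> (forall x, v1 x + v2 x = v x) ->
  Inv m s1 (cval v1) -> Inv m s2 (cval v2) -> Inv m s (cval v).
Proof.
  intros Hr Hsum Hinv1 Hinv2; destruct Hr as [j Hj]; simpl; intros ->.
  specialize (Hinv1 eq_refl); specialize (Hinv2 eq_refl).
  rewrite <- !(cval_sum k v1 v2 v Hsum).
  eapply split_bound; [exact Hinv1 | exact Hinv2 | lia].
Qed.

Lemma Inv_reach
  (Hlevel : forall v, reach (B k) leafQ (qinit m) v -> lowz m (cval v) ->
            tower m <= cval v (cd m)) :
  forall s v, reach (B k) leafQ s v -> lowz m (cval v) -> Inv m s (cval v).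
Proof.
  induction 1 as [s v Hl | s v u s1 v1 Hr Hs Hreach IH
                 | s v s1 v1 s2 v2 Hr Hsum _ IH1 _ IH2]; intros Hlow.
  - now rewrite Hl.
  - destruct (Nat.eq_dec (state_level s) (S m)) as [Hlev|Hlev]; [|now apply Inv_off_level].
    assert (Hlow1 : lowz m (cval v1)).
    { apply (lowz_unary k m v v1 u Hs); [|exact Hlow].
      intros x Hx; apply (unary_frame k s u s1 Hr); lia. }
    apply (Inv_unary s u s1 v v1 Hr Hs (IH Hlow1)).
    intros ->; now apply Hlevel.
  - destruct (lowz_split k m v1 v2 v Hsum Hlow) as [Hlow1 Hlow2].
    exact (Inv_split s s1 s2 v v1 v2 Hr Hsum (IH1 Hlow1) (IH2 Hlow2)).
Qed.

End Necessity.

(* The base level: the only rule leaving q^init_1 removes 2 from d_1. *)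
Lemma tower1_le_of_reach k v :
  1 <= k -> reach (B k) leafQ (qinit 1) v -> tower 1 <= cval v (cd 1).
Proof.
  intros Hk Hr; inversion Hr as [? ? Hl | ? ? u s1 v1 Hu Hs _ | ? ? ? ? ? ? Hsp]; subst.
  - discriminate Hl.
  - inversion Hu as [| j Hj | | | | |]; subst; [|lia].
    pose proof (cval_step k v v1 _ Hs (cd 1) (is_bctr_cd k 1 (le_n 1) Hk)) as HA.
    simpl_disp HA. simpl; lia.
  - inversion Hsp.
Qed.

Lemma tower_le_of_reach k : forall j, 1 <= j -> j <= k ->
  forall v, reach (B k) leafQ (qinit j) v -> lowz j (cval v) -> tower j <= cval v (cd j).
Proof.
  induction j as [|m IHm]; intros Hj Hjk v Hr Hlow; [lia|].
  destruct (Nat.eq_dec m 0) as [->|Hm]; [now apply tower1_le_of_reach|].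
  assert (Hinv : Inv m (qinit (S m)) (cval v)).
  { apply (Inv_reach k m); try lia; [| exact Hr | intros c Hc; apply Hlow; lia].
    intros w Hw Hloww; apply IHm; auto; lia. }
  cbv beta zeta iota delta [Inv] in Hinv; specialize (Hinv eq_refl).
  rewrite (Hlow (cd m)), (Hlow (cd' m)) in Hinv by (simpl; lia).
  apply Nat.square_le_simpl_nonneg; [lia|].
  change (tower (S m)) with (2 ^ tower m).
  rewrite <- Nat.pow_add_r; replace (tower m + tower m) with (2 * tower m) by lia.
  simpl (2 ^ (2 * 0 + 0)) in Hinv; lia.
Qed.

Definition Good (k : nat) (s : bstate) (V : ctr -> nat) : Prop :=
  reach (B k) leafQ s (fun x => V (proj1_sig x)).

Definition upd (V : ctr -> nat) (c : ctr) (n : nat) : ctr -> nat :=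
  fun c' => if ctr_eqb c' c then n else V c'.

Lemma Good_ext k s V W : (forall c, V c = W c) -> Good k s V -> Good k s W.
Proof. intros H; apply reach_ext; intros x; apply H. Qed.

Lemma Good_unary k s u s' V W : Bk_unary k s u s' ->
  (forall x, Z.of_nat (W (proj1_sig x)) = (Z.of_nat (V (proj1_sig x)) + u x)%Z) ->
  Good k s' W -> Good k s V.
Proof. intros Hr Hs; exact (@reach_unary _ _ (B k) leafQ s _ u s' _ Hr Hs). Qed.

Lemma Good_split k s s1 s2 V V1 V2 : Bk_split k s s1 s2 ->
  (forall c, V1 c + V2 c = V c) -> Good k s1 V1 -> Good k s2 V2 -> Good k s V.
Proof.
  intros Hr Hsum; apply (@reach_split _ _ (B k) leafQ s _ s1 _ s2 _ Hr); intros x; apply Hsum.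
Qed.

Lemma lowz_upd m V c n : lowz m V -> m <= ctr_index c -> lowz m (upd V c n).
Proof.
  intros Hl Hc c' Hc'; unfold upd; destruct (ctr_eqb c' c) eqn:E; [|now apply Hl].
  destruct c as [i|i], c' as [j|j]; simpl in *; try discriminate.
  all: apply Nat.eqb_eq in E; lia.
Qed.

Lemma lowz_zero m : lowz m (fun _ => 0).
Proof. now intros c _. Qed.

Lemma pow2_pos n : 1 <= 2 ^ n.
Proof. pose proof (Nat.pow_nonzero 2 n); lia. Qed.

Lemma halves_bound n c : 2 ^ S n <= c -> 2 ^ n <= c / 2 <= c - c / 2.
Proof.
  rewrite Nat.pow_succ_r'; intros Hc; pose proof (Nat.div_mod_eq c 2);
    pose proof (Nat.mod_upper_bound c 2 ltac:(lia)); lia.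
Qed.

Ltac solve_vec :=
  first [intros [[?i|?i] ?Hx] | intros [?i|?i] | idtac];
  unfold upd, evec, vadd, vscale, zvec; cbn [proj1_sig ctr_eqb];
  repeat match goal with |- context [Nat.eqb ?x ?y] => destruct (Nat.eqb_spec x y) end;
  subst; lia.

Section Sufficiency.

Variables (k m : nat).
Hypotheses (Hm : 1 <= m) (Hmk : S m <= k).

Lemma q1_transfer : forall n V, V (cd m) = n ->
  Good k (q2 (S m)) (upd (upd V (cd m) 0) (cd' m) (V (cd' m) + 2 * n)) ->
  Good k (q1 (S m)) V.
Proof.
  induction n as [|n IH]; intros V HV HG.
  - apply (Good_unary k _ (zvec k) (q2 (S m)) V V); [apply BU_12; lia | solve_vec |].
    eapply Good_ext; [|exact HG]; solve_vec.
  - pose proof (BU_loop1 k (S m) ltac:(lia)) as Hr; replace (S m - 1) with m in Hr by lia.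
    apply (Good_unary k _ _ _ V (upd (upd V (cd m) n) (cd' m) (V (cd' m) + 2)) Hr);
      [solve_vec|].
    apply IH; [solve_vec|]. eapply Good_ext; [|exact HG]; solve_vec.
Qed.

Lemma q2_transfer : forall n V, V (cd' m) = n ->
  Good k (q2 (S m)) (upd (upd V (cd' m) 0) (cd m) (V (cd m) + n)) ->
  Good k (q2 (S m)) V.
Proof.
  induction n as [|n IH]; intros V HV HG.
  - eapply Good_ext; [|exact HG]; solve_vec.
  - pose proof (BU_loop2 k (S m) ltac:(lia)) as Hr; replace (S m - 1) with m in Hr by lia.
    apply (Good_unary k _ _ _ V (upd (upd V (cd' m) n) (cd m) (V (cd m) + 1)) Hr);
      [solve_vec|].
    apply IH; [solve_vec|]. eapply Good_ext; [|exact HG]; solve_vec.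
Qed.

(* One round at level m+1: from q^init with d'_m = 0, d_m becomes 2(d_m + 1),
   which a split shares equally between two q^loop children while d_{m+1}
   is shared as c1 + c2. *)
Lemma qinit_round V c1 c2 : V (cd' m) = 0 -> c1 + c2 = V (cd (S m)) ->
  Good k (qloop (S m)) (upd (upd V (cd m) (V (cd m) + 1)) (cd (S m)) c1) ->
  Good k (qloop (S m)) (upd (upd (fun _ => 0) (cd m) (V (cd m) + 1)) (cd (S m)) c2) ->
  Good k (qinit (S m)) V.
Proof.
  intros Hb Hc HG1 HG2; set (a := V (cd m)) in *.
  pose proof (BU_init k (S m) ltac:(lia)) as Hr; replace (S m - 1) with m in Hr by lia.
  apply (Good_unary k _ _ _ V (upd V (cd m) (a + 1)) Hr); [solve_vec|].
  apply (q1_transfer (a + 1)); [solve_vec|].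
  apply (q2_transfer (2 * (a + 1))); [solve_vec|].
  refine (Good_split k _ _ _ _ _ _ (BS k (S m) ltac:(lia)) _ HG1 HG2).
  solve_vec.
Qed.

(* Sufficiency at level m, the induction hypothesis of [reach_of_tower_le]. *)
Hypothesis reach_level_m :
  forall V, lowz m V -> tower m <= V (cd m) -> Good k (qinit m) V.

Lemma qloop_descend W : lowz m W -> tower m <= W (cd m) -> 1 <= W (cd (S m)) ->
  Good k (qloop (S m)) W.
Proof.
  intros Hl HT Hc.
  pose proof (BU_down k (S m) ltac:(lia)) as Hr; replace (S m - 1) with m in Hr by lia.
  apply (Good_unary k _ _ _ W (upd W (cd (S m)) (W (cd (S m)) - 1)) Hr); [solve_vec|].
  apply reach_level_m; [apply lowz_upd; [exact Hl | simpl; lia] | solve_vec].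
Qed.

(* A q^loop state with d'_m = 0 succeeds once d_{m+1} >= 2^n, where
   n + d_m >= tower m: each round doubles d_m's share and halves d_{m+1}. *)
Lemma qloop_budget : forall n W, lowz m W -> W (cd' m) = 0 ->
  tower m <= W (cd m) + n -> 2 ^ n <= W (cd (S m)) -> Good k (qloop (S m)) W.
Proof.
  induction n as [|n IH]; intros W Hl Hb HT Hc.
  all: destruct (Nat.le_gt_cases (tower m) (W (cd m))) as [Hge|Hlt];
    [apply qloop_descend; [exact Hl | exact Hge | exact (Nat.le_trans _ _ _ (pow2_pos _) Hc)] |].
  { lia. }
  apply (Good_unary k _ (zvec k) (qinit (S m)) W W); [apply BU_back; lia | solve_vec |].
  set (c := W (cd (S m))) in *.
  pose proof (halves_bound n c Hc) as Hhalf.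
  apply (qinit_round W (c / 2) (c - c / 2) Hb ltac:(lia)); apply IH;
    first [ apply lowz_upd; [apply lowz_upd; [exact Hl || apply lowz_zero |] |]; simpl; lia
          | solve_vec ].
Qed.

End Sufficiency.

Lemma tower_pos n : 1 <= tower n.
Proof. destruct n; simpl; [lia | apply pow2_pos]. Qed.

Lemma reach_of_tower_le k : forall j, 1 <= j -> j <= k ->
  forall V, lowz j V -> tower j <= V (cd j) -> Good k (qinit j) V.
Proof.
  induction j as [|m IHm]; intros Hj Hjk V Hl HT; [lia|].
  destruct (Nat.eq_dec m 0) as [->|Hm].
  - (* level 1: the rule to q^leaf removes 2 <= d_1 *)
    apply (Good_unary k _ _ _ V (upd V (cd 1) (V (cd 1) - 2)) (BU_base k Hjk));
      [simpl in HT; solve_vec | now apply reach_leaf].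
  - assert (Hlm : lowz m V) by (intros c Hc; apply Hl; lia).
    assert (Ha : V (cd m) = 0) by (apply Hl; simpl; lia).
    assert (Hb : V (cd' m) = 0) by (apply Hl; simpl; lia).
    pose proof (tower_pos m) as Ht; destruct (tower m) as [|n] eqn:Et; [lia|].
    change (tower (S m)) with (2 ^ tower m) in HT; rewrite Et in HT.
    set (c := V (cd (S m))) in *.
    pose proof (halves_bound n c HT) as Hhalf.
    (* a first round gives two q^loop copies with d_m = 1 and budget 2^(tower m - 1) *)
    assert (Hlevel : forall W, lowz m W -> tower m <= W (cd m) -> Good k (qinit m) W)
      by (intros W HW HTW; apply IHm; auto; lia).
    apply (qinit_round k m ltac:(lia) Hjk V (c / 2) (c - c / 2) Hb); [lia | |];
      apply (qloop_budget k m ltac:(lia) Hjk Hlevel n);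
      first [ apply lowz_upd; [apply lowz_upd; [exact Hlm || apply lowz_zero |] |]; simpl; lia
            | rewrite ?Et; solve_vec ].
Qed.

Theorem lemma6p1 (k : nat) (Hk : (1 <= k)%nat) (v0 : bctr k -> nat)
  (Hv0 : forall x : bctr k,
      match proj1_sig x with cd i => (i < k)%nat | cd' i => (i < k)%nat end ->
      v0 x = 0%nat) :
  (exists t : dtree bstate (bctr k),
      is_deduction_tree (B k) t /\ rooted t (qinit k) v0 /\
      leaf_covering (fun q => q = qleaf) t)
  <-> (tower k <= v0 (dk k Hk))%nat.
Proof.
  rewrite reach_iff_tree, <- (cval_at k v0 (dk k Hk)); cbn [proj1_sig dk].
  assert (Hlow : lowz k (cval v0)).
  { intros c Hc; unfold cval; destruct bool_dec as [H|H]; [|reflexivity].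
    apply Hv0; destruct c; exact Hc. }
  split.
  - intros Hr; now apply (tower_le_of_reach k k Hk (le_n k)).
  - intros HT; apply (reach_ext _ _ (B k) leafQ (qinit k) (fun x => cval v0 (proj1_sig x)));
      [apply cval_at | exact (reach_of_tower_le k k Hk (le_n k) (cval v0) Hlow HT)].
Qed.
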